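(* Assume that (A1) $\mu_k\sim 1/k^2$, (A2) $\nabla L$ is $M$-Lipschitz, i.e. $\|\nabla L(x)-\nabla L(y)\|\le M\|x-y\|$ for all $x,y\in\mathcal H$, and that either (i) $\lambda>M\mu_0$, or (ii) there is $B>0$ with $\|\nabla L(x)\|\le B$ for all $x\in\mathcal H$. Then there exist constants $m,c>0$ such that $$\forall x\in\mathcal H,\qquad \langle Ax-\nabla L(x),x\rangle\le -m\|x\|^2+c .$$
   Context: Let $\mathcal H$ be a separable real Hilbert space with inner product $\langle\cdot,\cdot\rangle$, norm $\|\cdot\|$, and orthonormal basis $(f_k)_{k\ge0}$, and let $\mu_0\ge\mu_1\ge\cdots>0$ (the eigenvalues of the integral operator of a kernel $K$, with eigenfunctions $f_k$). The RKHS is $\mathcal H_K=\{\sum_k\alpha_kf_k:\sum_k\alpha_k^2/\mu_k<\infty\}$ with $\|\sum_k\alpha_kf_k\|_{\mathcal H_K}^2=\sum_k\alpha_k^2/\mu_k$. Fix $\lambda>0$ and let $A$ be the unbounded diagonal operator $Af_k=-(\lambda/\mu_k)f_k$ (i.e. $A=-\frac\lambda2\nabla\|\cdot\|_{\mathcal H_K}^2$), with the inequality understood for $x$ in its domain. $L:\mathcal H\to\mathbb R$ is Fréchet differentiable with gradient $\nabla L$ (Riesz representer of the Fréchet derivative) and admits a global minimizer $x^*$. *)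

From HB Require Import structures.
From mathcomp Require Import all_boot all_order all_algebra.
From mathcomp Require Import all_classical all_reals all_analysis.
Set Implicit Arguments. Unset Strict Implicit. Unset Printing Implicit Defensive.
Import Order.TTheory GRing.Theory Num.Theory.
Import numFieldNormedType.Exports.
Local Open Scope classical_set_scope.
Local Open Scope ring_scope.

Definition is_inner_product {R : realType} {V : normedModType R}
  (ip : V -> V -> R) : Prop :=
  (forall x y, ip x y = ip y x) /\
  (forall (a : R) (x y z : V), ip (a *: x + y) z = a * ip x z + ip y z) /\
  (forall x, ip x x = `|x| ^+ 2).

Definition is_ONB {R : realType} {V : normedModType R}
  (ip : V -> V -> R) (f : nat -> V) : Prop :=
  (forall i j : nat, ip (f i) (f j) = (i == j)%:R) /\
  (forall x : V, (fun n : nat => \sum_(k < n) ip x (f k) *: f k) @ \oo --> x).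

Definition A_partial {R : realType} {V : normedModType R}
  (ip : V -> V -> R) (f : nat -> V) (mu : nat -> R) (lam : R) (x : V) :
  nat -> V :=
  fun n => \sum_(k < n) (- (lam / mu k) * ip x (f k)) *: f k.

(* Domain of the unbounded diagonal operator A: the defining series converges. *)
Definition A_dom {R : realType} {V : normedModType R}
  (ip : V -> V -> R) (f : nat -> V) (mu : nat -> R) (lam : R) (x : V) : Prop :=
  cvg (A_partial ip f mu lam x @ \oo).

(* A x, the limit of the series (meaningful on A_dom). *)
Definition A_op {R : realType} {V : normedModType R}
  (ip : V -> V -> R) (f : nat -> V) (mu : nat -> R) (lam : R) (x : V) : V :=
  lim (A_partial ip f mu lam x @ \oo).

From HB Require Import structures.
From mathcomp Require Import all_boot all_order all_algebra.
From mathcomp Require Import all_classical all_reals all_analysis.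
From mathcomp Require Import ring lra.
Import Order.TTheory GRing.Theory Num.Theory.
Import numFieldNormedType.Exports.
Local Open Scope classical_set_scope.
Local Open Scope ring_scope.

(* Since mu_k <= mu_0, every term of the series -<Ax,x> = sum_k (lam/mu_k) <x,f_k>^2
   dominates (lam/mu_0) <x,f_k>^2, and these sum to (lam/mu_0) ||x||^2: A is
   (lam/mu_0)-coercive.  In both cases (i) and (ii) the gradient grows at most like
   G + K ||x|| with K < lam/mu_0 (K = M, resp. K = 0), so by Cauchy-Schwarz
   <Ax - grad L(x), x> <= -(lam/mu_0 - K) ||x||^2 + G ||x||, and Young's inequality
   absorbs the linear term into half of the quadratic one. *)

Lemma ler_young_sqr {R : realFieldType} (d G t : R) :
  0 < d -> G * t <= d / 2 * t ^+ 2 + G ^+ 2 / (2 * d).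
Proof.
move=> d_gt0; rewrite -subr_ge0.
have -> : d / 2 * t ^+ 2 + G ^+ 2 / (2 * d) - G * t = (d * t - G) ^+ 2 / (2 * d).
  by field; rewrite lt0r_neq0.
by rewrite divr_ge0 ?sqr_ge0 // mulr_ge0 // ltW.
Qed.

Lemma lipschitz_norm_le {R : realFieldType} {V W : normedModType R}
    {g : V -> W} {M : R} :
  (forall x y, `|g x - g y| <= M * `|x - y|) ->
  forall x, `|g x| <= `|g 0| + M * `|x|.
Proof.
move=> g_lip x; have := g_lip x 0; rewrite subr0.
by have := ler_normD (g x - g 0) (g 0); rewrite subrK; lra.
Qed.

Section InnerProduct.
Context {R : realType} {V : normedModType R} {ip : V -> V -> R}.
Hypothesis ip_inner : is_inner_product ip.

Lemma ipC x y : ip x y = ip y x.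
Proof. by case: ip_inner. Qed.

Lemma ipZlDl a x y z : ip (a *: x + y) z = a * ip x z + ip y z.
Proof. by case: ip_inner => _ []. Qed.

Lemma ipxx x : ip x x = `|x| ^+ 2.
Proof. by case: ip_inner => _ []. Qed.

Lemma ip0l z : ip 0 z = 0.
Proof. by have := ipZlDl 1 0 0 z; rewrite scaler0 addr0 mul1r; lra. Qed.

Lemma ipDl x y z : ip (x + y) z = ip x z + ip y z.
Proof. by have := ipZlDl 1 x y z; rewrite scale1r mul1r. Qed.

Lemma ipZl a x z : ip (a *: x) z = a * ip x z.
Proof. by have := ipZlDl a x 0 z; rewrite addr0 ip0l addr0. Qed.

Lemma ipNl x z : ip (- x) z = - ip x z.
Proof. by rewrite -scaleN1r ipZl mulN1r. Qed.

Lemma ipBl x y z : ip (x - y) z = ip x z - ip y z.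
Proof. by rewrite ipDl ipNl. Qed.

Lemma ipBr x y z : ip z (x - y) = ip z x - ip z y.
Proof. by rewrite ipC ipBl ![ip _ z]ipC. Qed.

Lemma ipZr a x z : ip z (a *: x) = a * ip z x.
Proof. by rewrite ipC ipZl ipC. Qed.

Lemma ip_suml I (r : seq I) (P : pred I) (F : I -> V) x :
  ip (\sum_(i <- r | P i) F i) x = \sum_(i <- r | P i) ip (F i) x.
Proof. by apply: (big_morph (ip^~ x)) => [y z|]; rewrite ?ipDl ?ip0l. Qed.

Lemma ip_le_norm u x : ip u x <= `|u| * `|x|.
Proof.
have [->|u0] := eqVneq u 0; first by rewrite ip0l normr0 mul0r.
have [->|x0] := eqVneq x 0; first by rewrite ipC ip0l normr0 mulr0.
have n_gt0 : 0 < `|u| * `|x| by rewrite mulr_gt0 ?normr_gt0.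
(* ||(||x||) u - (||u||) x||^2 = 2 ||u|| ||x|| (||u|| ||x|| - <u,x>) *)
have := sqr_ge0 `| `|x| *: u - `|u| *: x |.
rewrite -ipxx !(ipBl, ipBr, ipZl, ipZr) [ip x u]ipC !ipxx => sq_ge0.
by rewrite -subr_ge0 -(pmulr_rge0 _ n_gt0); nra.
Qed.

Lemma ip_Cauchy_Schwarz u x : `|ip u x| <= `|u| * `|x|.
Proof.
rewrite ler_norml ip_le_norm andbT lerNl -ipNl -normrN.
exact: ip_le_norm.
Qed.

Lemma ip_cvgl x {u : nat -> V} {l} :
  u @ \oo --> l -> (fun n => ip (u n) x) @ \oo --> ip l x.
Proof.
move=> /cvgrPdist_lt u_l; apply/cvgrPdist_lt => e e_gt0.
have x1_gt0 : 0 < `|x| + 1 by rewrite ltr_pwDr.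
apply: filterS (u_l _ (divr_gt0 e_gt0 x1_gt0)) => n.
rewrite -ipBl ltr_pdivlMr // => dist_lt.
apply: le_lt_trans (ip_Cauchy_Schwarz _ _) (le_lt_trans _ dist_lt).
by rewrite ler_wpM2l // lerDl.
Qed.

Lemma ip_sub_coercive {D : V -> Prop} {T g : V -> V} {a G K : R} :
  K < a ->
  (forall x, D x -> ip (T x) x <= - a * `|x| ^+ 2) ->
  (forall x, `|g x| <= G + K * `|x|) ->
  exists m c : R, 0 < m /\ 0 < c /\
    forall x, D x -> ip (T x - g x) x <= - m * `|x| ^+ 2 + c.
Proof.
move=> K_lt_a T_coercive g_growth; set d := a - K.
have d_gt0 : 0 < d by rewrite subr_gt0.
exists (d / 2), (G ^+ 2 / (2 * d) + 1); split; first by rewrite divr_gt0.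
split; first by rewrite ltr_wpDl // divr_ge0 ?sqr_ge0 // mulr_ge0 // ltW.
move=> x Dx; rewrite ipBl.
have := T_coercive x Dx.
have := ip_le_norm (- g x) x; rewrite ipNl normrN.
have := ler_wpM2r (normr_ge0 x) (g_growth x).
have := ler_young_sqr d G `|x| d_gt0.
rewrite /d; nra.
Qed.

End InnerProduct.

Lemma ip_A_op_le (R : realType) (V : normedModType R) (ip : V -> V -> R)
    (f : nat -> V) (mu : nat -> R) (lam a : R) x :
  is_inner_product ip ->
  (forall y : V, (fun n => \sum_(k < n) ip y (f k) *: f k) @ \oo --> y) ->
  (forall k, a <= lam / mu k) ->
  A_dom ip f mu lam x -> ip (A_op ip f mu lam x) x <= - a * `|x| ^+ 2.
Proof.
move=> ip_inner f_expand a_le x_dom.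
have partial_cvg := cvgD (ip_cvgl ip_inner x x_dom)
  (cvgMl_tmp (a := a) (ip_cvgl ip_inner x (f_expand x))).
suff : ip (A_op ip f mu lam x) x + a * ip x x <= 0 by rewrite (ipxx ip_inner); lra.
apply: (cvgr_to_le (partial_cvg _ _)); apply: nearW => n /=.
rewrite fctE /A_partial !(ip_suml ip_inner) big_distrr -big_split /=.
apply: sumr_le0 => k _.
rewrite !(ipZl ip_inner) [ip (f k) x](ipC ip_inner) -mulrA -mulrDl -expr2.
by rewrite mulr_le0_ge0 ?sqr_ge0 // addrC subr_le0.
Qed.

Theorem proposition1 (R : realType) (H : completeNormedModType R)
  (ip : H -> H -> R) (f : nat -> H) (mu : nat -> R) (lam : R)
  (L : H -> R) (gradL : H -> H) (M : R) :
  is_inner_product ip ->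
  is_ONB ip f ->
  (forall k, 0 < mu k) ->
  (forall k, mu k.+1 <= mu k) ->
  0 < lam ->
  (forall x, differentiable L x) ->
  (forall x v, 'd L x v = ip (gradL x) v) ->
  (exists xstar, forall x, L xstar <= L x) ->
  (* (A1) mu_k ~ 1/k^2 *)
  (exists c1 c2 : R, 0 < c1 /\ 0 < c2 /\
     forall k : nat, (0 < k)%N ->
       c1 / (k%:R ^+ 2) <= mu k /\ mu k <= c2 / (k%:R ^+ 2)) ->
  (* (A2) gradL is M-Lipschitz *)
  (forall x y, `|gradL x - gradL y| <= M * `|x - y|) ->
  (* (i) or (ii) *)
  (M * mu 0%N < lam \/ exists B : R, 0 < B /\ forall x, `|gradL x| <= B) ->
  exists m c : R, 0 < m /\ 0 < c /\
    forall x, A_dom ip f mu lam x ->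
      ip (A_op ip f mu lam x - gradL x) x <= - m * `|x| ^+ 2 + c.
Proof.
move=> ip_inner [_ f_expand] mu_gt0 /nonincreasing_seqP mu_nonincr lam_gt0
  _ _ _ _ gradL_lip cases.
have A_coercive x : A_dom ip f mu lam x ->
    ip (A_op ip f mu lam x) x <= - (lam / mu 0%N) * `|x| ^+ 2.
  apply: ip_A_op_le ip_inner f_expand _ => k.
  by rewrite ler_pM2l // lef_pV2 ?posrE // mu_nonincr.
case: cases => [M_small | [B [_ gradL_bounded]]].
- have M_lt : M < lam / mu 0%N by rewrite ltr_pdivlMr.
  exact (ip_sub_coercive ip_inner M_lt A_coercive (lipschitz_norm_le gradL_lip)).
- have lam_mu0_gt0 : 0 < lam / mu 0%N by exact: divr_gt0.
  have gradL_growth x : `|gradL x| <= B + 0 * `|x| by rewrite mul0r addr0.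
  exact (ip_sub_coercive ip_inner lam_mu0_gt0 A_coercive gradL_growth).
Qed.
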